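(* Let $d\le n$, $\gamma>1$, and $\lambda_1,\lambda_2>0$ with $\lambda_1+\lambda_2=1$. For every $v\in\mathbb R^d$ with $\|v\|_2\le1$ there exist $\mathbf X_1,\mathbf X_2\in\mathfrak X(\gamma)$ and $1$-sparse $\beta_1,\beta_2\in\mathbb R^d$ such that, with $\Sigma_k=\frac1n\mathbf X_k^\top\mathbf X_k$, 1. $\lambda_1\Sigma_1+\lambda_2\Sigma_2=I_d$, and 2. $\lambda_1\Sigma_1\beta_1+\lambda_2\Sigma_2\beta_2=v=\vartheta_{\boldsymbol\lambda}$, where $\vartheta_{\boldsymbol\lambda}=\arg\min_{\vartheta}\sum_{k=1}^2\lambda_k\|\mathbf X_k(\vartheta-\beta_k)\|_2^2$.
   Context: $\mathfrak X(\gamma)=\{\mathbf X\in\mathbb R^{n\times d}:\gamma^{-1}I_d\preceq n^{-1}\mathbf X^\top\mathbf X\preceq\gamma I_d\}$. A vector is $1$-sparse if it has at most one nonzero entry. *)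

From mathcomp Require Import all_boot all_order all_algebra.
From mathcomp Require Import reals.
Set Implicit Arguments. Unset Strict Implicit. Unset Printing Implicit Defensive.
Import Order.TTheory GRing.Theory Num.Theory.
Local Open Scope ring_scope.

Section Defs.
Variable R : realType.

Definition Sigma (n d : nat) (X : 'M[R]_(n, d)) : 'M[R]_d :=
  (n%:R)^-1 *: (X^T *m X).

Definition psd (d : nat) (A : 'M[R]_d) : Prop :=
  forall x : 'cV[R]_d, 0 <= (x^T *m A *m x) ord0 ord0.

Definition loewner_le (d : nat) (A B : 'M[R]_d) : Prop := psd (B - A).

Definition Xclass (n d : nat) (gamma : R) (X : 'M[R]_(n, d)) : Prop :=
  loewner_le (gamma^-1 *: 1%:M) (Sigma X) /\ loewner_le (Sigma X) (gamma *: 1%:M).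

Definition sqnorm (m : nat) (u : 'cV[R]_m) : R := \sum_(i < m) u i ord0 ^+ 2.

Definition norm2 (m : nat) (u : 'cV[R]_m) : R := Num.sqrt (sqnorm u).

Definition one_sparse (d : nat) (b : 'cV[R]_d) : Prop :=
  (#|[set i : 'I_d | b i ord0 != 0%R]| <= 1)%N.

Definition obj2 (n d : nat) (l1 l2 : R) (X1 X2 : 'M[R]_(n, d))
  (b1 b2 theta : 'cV[R]_d) : R :=
  l1 * norm2 (X1 *m (theta - b1)) ^+ 2 + l2 * norm2 (X2 *m (theta - b2)) ^+ 2.

Definition is_argmin2 (n d : nat) (l1 l2 : R) (X1 X2 : 'M[R]_(n, d))
  (b1 b2 theta : 'cV[R]_d) : Prop :=
  (forall t, obj2 l1 l2 X1 X2 b1 b2 theta <= obj2 l1 l2 X1 X2 b1 b2 t) /\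
  (forall t, obj2 l1 l2 X1 X2 b1 b2 t <= obj2 l1 l2 X1 X2 b1 b2 theta -> t = theta).

End Defs.

(* Split v = v0 e0 + v' with v' orthogonal to the first basis vector e0 and take
   X_k = sqrt n * P (I + w_k e0^T), with P : R^d -> R^n an isometric embedding, so that
   Sigma_k = (I + w_k e0^T)^T (I + w_k e0^T); for |w_k| <= eta small, X_k lies in X(gamma).
   With k = l1 / l2, w1 = c v' + a e0, w2 = - k c v' + a e0 and a^2 + 2 a + k c^2 |v'|^2 = 0,
   the rank-one corrections cancel in l1 Sigma_1 + l2 Sigma_2 = I, while Sigma_1 e0 keeps the
   component c v' along v'; hence suitable multiples b_k of e0 satisfy
   l1 Sigma_1 b1 + l2 Sigma_2 b2 = v.  Since the weighted Gram matrix is I, the loss is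
   n |theta - v|^2 plus a constant, so v is its unique minimizer. *)

From mathcomp Require Import all_boot all_order all_algebra.
From mathcomp Require Import reals ring lra.
Import Order.TTheory GRing.Theory Num.Theory.
Local Open Scope ring_scope.
Set Implicit Arguments. Unset Strict Implicit. Unset Printing Implicit Defensive.

Section SquaredNorm.
Variable R : realType.
Implicit Types (m : nat).

Lemma sqnorm_ge0 m (u : 'cV[R]_m) : 0 <= sqnorm u.
Proof. by apply: sumr_ge0 => i _; rewrite sqr_ge0. Qed.

Lemma sqnorm_eq0 m (u : 'cV[R]_m) : sqnorm u = 0 -> u = 0.
Proof.
move=> /eqP; rewrite psumr_eq0 => [/allP u0|i _]; last exact: sqr_ge0.
apply/matrixP => i j; rewrite ord1 mxE.
by have := u0 i (mem_index_enum i); rewrite sqrf_eq0 => /eqP.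
Qed.

Lemma sqnormE m (u : 'cV[R]_m) : u^T *m u = (sqnorm u)%:M.
Proof.
apply/matrixP => i j; rewrite !ord1 !mxE eqxx mulr1n.
by apply: eq_bigr => k _; rewrite !mxE expr2.
Qed.

Lemma norm2_sqr m (u : 'cV[R]_m) : norm2 u ^+ 2 = sqnorm u.
Proof. by rewrite sqr_sqrtr // sqnorm_ge0. Qed.

Lemma sqnorm_mulmx m p (M : 'M[R]_(m, p)) u :
  (u^T *m (M^T *m M) *m u) ord0 ord0 = sqnorm (M *m u).
Proof.
have -> : u^T *m (M^T *m M) *m u = (M *m u)^T *m (M *m u).
  by rewrite trmx_mul !mulmxA.
by rewrite sqnormE mxE eqxx mulr1n.
Qed.

Lemma entry0_sqr_le m (x : 'cV[R]_m.+1) : x ord0 ord0 ^+ 2 <= sqnorm x.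
Proof.
by rewrite /sqnorm big_ord_recl lerDl; apply: sumr_ge0 => i _; apply: sqr_ge0.
Qed.

Lemma quad_form_scalar m (x : 'cV[R]_m) (c : R) :
  (x^T *m (c *: 1%:M) *m x) ord0 ord0 = c * sqnorm x.
Proof. by rewrite -scalemxAr mulmx1 -scalemxAl sqnormE !mxE eqxx mulr1n. Qed.

Lemma quad_formB m (A B : 'M[R]_m) (x : 'cV[R]_m) :
  (x^T *m (A - B) *m x) ord0 ord0
  = (x^T *m A *m x) ord0 ord0 - (x^T *m B *m x) ord0 ord0.
Proof. by rewrite mulmxBr mulmxBl mxE [(- _ : 'M_1) _ _]mxE. Qed.

Lemma sqnorm_add_scale_bounds m (x w : 'cV[R]_m) (s eta : R) :
  0 < eta <= 1 -> s ^+ 2 <= sqnorm x -> sqnorm w <= eta ^+ 2 ->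
  (1 - eta) ^+ 2 * sqnorm x <= sqnorm (x + s *: w) <= (1 + eta) ^+ 2 * sqnorm x.
Proof.
move=> /andP[eta_gt0 eta_le1] s_le w_le.
have sqnormE' : sqnorm (x + s *: w) = \sum_i (x i ord0 + s * w i ord0) ^+ 2.
  by apply: eq_bigr => i _; rewrite !mxE.
(* coordinatewise, both bounds are a square [(eta x_i -/+ s w_i)^2 >= 0] *)
have lower : eta * (1 - eta) * sqnorm x - (1 - eta) * s ^+ 2 * sqnorm w
    <= eta * sqnorm (x + s *: w).
  rewrite sqnormE' /sqnorm !mulr_sumr -sumrB; apply: ler_sum => i _.
  set a : R := x i ord0; set b : R := w i ord0.
  have -> : eta * (a + s * b) ^+ 2
      = eta * (1 - eta) * a ^+ 2 - (1 - eta) * s ^+ 2 * b ^+ 2 + (eta * a + s * b) ^+ 2.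
    by ring.
  by rewrite lerDl sqr_ge0.
have upper : eta * sqnorm (x + s *: w)
    <= eta * (1 + eta) * sqnorm x + (1 + eta) * s ^+ 2 * sqnorm w.
  rewrite sqnormE' /sqnorm !mulr_sumr -big_split /=; apply: ler_sum => i _.
  set a : R := x i ord0; set b : R := w i ord0.
  have -> : eta * (1 + eta) * a ^+ 2 + (1 + eta) * s ^+ 2 * b ^+ 2
      = eta * (a + s * b) ^+ 2 + (eta * a - s * b) ^+ 2.
    by ring.
  by rewrite lerDl sqr_ge0.
have sw_le : s ^+ 2 * sqnorm w <= sqnorm x * eta ^+ 2.
  by apply: ler_pM; rewrite ?sqr_ge0 ?sqnorm_ge0.
have eta_le1' : 0 <= 1 - eta by rewrite subr_ge0.
apply/andP; split; rewrite -(ler_pM2l eta_gt0).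
  by have := ler_wpM2l eta_le1' sw_le; nra.
have eta_ge0' : 0 <= 1 + eta by lra.
by have := ler_wpM2l eta_ge0' sw_le; nra.
Qed.

End SquaredNorm.

Section LeastSquares.
Variables (R : realType) (n d : nat).
Hypothesis n_gt0 : (0 < n)%N.
Implicit Types (X : 'M[R]_(n, d)) (b t : 'cV[R]_d).

Lemma Sigma_sym X : (Sigma X)^T = Sigma X.
Proof. by rewrite /Sigma linearZ /= trmx_mul trmxK. Qed.

Lemma sqnorm_design X u :
  sqnorm (X *m u) = n%:R * (u^T *m Sigma X *m u) ord0 ord0.
Proof.
rewrite /Sigma -scalemxAr -scalemxAl mxE sqnorm_mulmx mulrA mulfV ?mul1r //.
by rewrite pnatr_eq0 -lt0n.
Qed.

Lemma quad_shift (S : 'M[R]_d) (y h : 'cV[R]_d) : S^T = S ->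
  (y + h)^T *m S *m (y + h) = y^T *m S *m y + h^T *m (S *m (2 *: y + h)).
Proof.
move=> S_sym.
have yh : y^T *m S *m h = h^T *m S *m y.
  by rewrite [LHS]mx11_scalar -tr_scalar_mx -mx11_scalar !trmx_mul trmxK S_sym mulmxA.
rewrite [(y + h)^T]linearD /= !mulmxDl !mulmxDr yh -!scalemxAr !mulmxA.
by rewrite scaler_nat mulr2n !addrA.
Qed.

Definition weighted_loss (l1 l2 : R) (X1 X2 : 'M[R]_(n, d)) (b1 b2 t : 'cV[R]_d)
    : 'M[R]_1 :=
  l1 *: ((t - b1)^T *m Sigma X1 *m (t - b1)) + l2 *: ((t - b2)^T *m Sigma X2 *m (t - b2)).

Variables (l1 l2 : R) (X1 X2 : 'M[R]_(n, d)) (b1 b2 v : 'cV[R]_d).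
Hypothesis Sigma_mix : l1 *: Sigma X1 + l2 *: Sigma X2 = 1%:M.
Hypothesis moment_mix : l1 *: (Sigma X1 *m b1) + l2 *: (Sigma X2 *m b2) = v.

Lemma weighted_loss_shift t :
  weighted_loss l1 l2 X1 X2 b1 b2 t =
  weighted_loss l1 l2 X1 X2 b1 b2 v + (t - v)^T *m (t - v).
Proof.
set h : 'cV[R]_d := t - v; set y1 : 'cV[R]_d := v - b1; set y2 : 'cV[R]_d := v - b2.
have [tE1 tE2] : t - b1 = y1 + h /\ t - b2 = y2 + h.
  by split; rewrite /h [RHS]addrC addrA subrK.
have normal_eq : l1 *: (Sigma X1 *m y1) + l2 *: (Sigma X2 *m y2) = 0.
  rewrite !mulmxBr !scalerBr addrACA -opprD moment_mix.
  by rewrite !scalemxAl -mulmxDl Sigma_mix mul1mx subrr.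
rewrite /weighted_loss tE1 tE2 -/y1 -/y2; clearbody h y1 y2.
rewrite (quad_shift _ _ (Sigma_sym X1)) (quad_shift _ _ (Sigma_sym X2)).
rewrite !scalerDr addrACA; congr (_ + _).
rewrite (scalemxAr l1 h^T) (scalemxAr l2 h^T) -mulmxDr; congr (_ *m _).
rewrite !mulmxDr !scalerDr addrACA -!scalemxAr (scalerA l1 2) (scalerA l2 2).
rewrite (mulrC l1 2) (mulrC l2 2) -(scalerA 2 l1) -(scalerA 2 l2) -(scalerDr 2).
by rewrite normal_eq scaler0 add0r !scalemxAl -mulmxDl Sigma_mix mul1mx.
Qed.

Lemma obj2E t :
  obj2 l1 l2 X1 X2 b1 b2 t = n%:R * weighted_loss l1 l2 X1 X2 b1 b2 t ord0 ord0.
Proof.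
by rewrite /obj2 !norm2_sqr !sqnorm_design !mxE mulrDr (mulrCA _ l1) (mulrCA _ l2).
Qed.

Lemma obj2_shift t :
  obj2 l1 l2 X1 X2 b1 b2 t = obj2 l1 l2 X1 X2 b1 b2 v + n%:R * sqnorm (t - v).
Proof. by rewrite !obj2E weighted_loss_shift sqnormE !mxE eqxx mulr1n mulrDr. Qed.

Lemma is_argmin2_normal_eq : is_argmin2 l1 l2 X1 X2 b1 b2 v.
Proof.
have n_pos : 0 < n%:R :> R by rewrite ltr0n.
split => t; rewrite (obj2_shift t).
  by rewrite lerDl mulr_ge0 ?ler0n ?sqnorm_ge0.
rewrite gerDl pmulr_rle0 // => tv_le0.
apply/eqP; rewrite -subr_eq0; apply/eqP/sqnorm_eq0.
by apply/le_anti; rewrite tv_le0 sqnorm_ge0.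
Qed.

End LeastSquares.

Section Shear.
Variables (R : realType) (d : nat).
Definition e0 : 'cV[R]_d.+1 := delta_mx ord0 ord0.
Implicit Types (w x : 'cV[R]_d.+1).

Definition shear w : 'M[R]_d.+1 := 1%:M + w *m e0^T.

Lemma tr_delta0_mul x : e0^T *m x = (x ord0 ord0)%:M.
Proof. by rewrite /e0 trmx_delta -rowE [LHS]mx11_scalar mxE. Qed.

Lemma mul_tr_delta0 x : x^T *m e0 = (x ord0 ord0)%:M.
Proof. by rewrite /e0 -colE [LHS]mx11_scalar !mxE. Qed.

Lemma shearE w x : shear w *m x = x + x ord0 ord0 *: w.
Proof. by rewrite mulmxDl mul1mx -mulmxA (tr_delta0_mul x) mul_mx_scalar. Qed.

Lemma gram_shear w : (shear w)^T *m shear w =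
  1%:M + w *m e0^T + e0 *m w^T + sqnorm w *: (e0 *m e0^T).
Proof.
rewrite /shear [(_ + _)^T]linearD /= trmx1 trmx_mul trmxK.
rewrite mulmxDl !mulmxDr mul1mx mulmx1 mul1mx !mulmxA -(mulmxA e0) sqnormE.
by rewrite mul_mx_scalar -scalemxAl !addrA.
Qed.

Lemma gram_shear_delta0 w :
  (shear w)^T *m shear w *m e0 = w + (1 + w ord0 ord0 + sqnorm w) *: e0.
Proof.
rewrite -mulmxA shearE mxE eqxx scale1r /shear [(_ + _)^T]linearD /= trmx1 trmx_mul trmxK.
rewrite mulmxDl mul1mx -mulmxA mulmxDr (mul_tr_delta0 w) sqnormE.
apply/matrixP => i j; rewrite !mxE big_ord1 !mxE !ord1 eqxx /=; ring.
Qed.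

Lemma gram_shear_mix (l1 l2 a : R) w1 w2 :
  l1 + l2 = 1 -> l1 *: w1 + l2 *: w2 = a *: e0 ->
  2 * a + l1 * sqnorm w1 + l2 * sqnorm w2 = 0 ->
  l1 *: ((shear w1)^T *m shear w1) + l2 *: ((shear w2)^T *m shear w2) = 1%:M.
Proof.
move=> l_sum w_mix sq_mix.
have w_mixE k : l1 * w1 k ord0 + l2 * w2 k ord0 = a * e0 k ord0.
  by move/matrixP: w_mix => /(_ k ord0); rewrite !mxE.
rewrite !gram_shear; apply/matrixP => i j; move: (w_mixE i) (w_mixE j).
rewrite !mxE !big_ord1 !mxE; set ei := _%:R; set ej := _%:R => w_mix_i w_mix_j.
move: sq_mix; set s1 := sqnorm w1; set s2 := sqnorm w2; set dij := (i == j)%:R => sq_mix.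
transitivity ((l1 + l2) * dij + (l1 * w1 i ord0 + l2 * w2 i ord0) * ej
    + ei * (l1 * w1 j ord0 + l2 * w2 j ord0) + (l1 * s1 + l2 * s2) * (ei * ej)).
  by ring.
rewrite l_sum w_mix_i w_mix_j; transitivity (dij + (2 * a + l1 * s1 + l2 * s2) * (ei * ej)).
  by ring.
by rewrite sq_mix mul0r addr0.
Qed.

Lemma sqnorm_orth_delta0 (vp : 'cV[R]_d.+1) p q : vp ord0 ord0 = 0 ->
  sqnorm (p *: vp + q *: e0) = p ^+ 2 * sqnorm vp + q ^+ 2.
Proof.
move=> vp0; rewrite /sqnorm !big_ord_recl !mxE vp0 eqxx /= mulr0 mulr1 add0r.
rewrite expr0n /= add0r mulr_sumr addrC; congr (_ + _).
by apply: eq_bigr => i _; rewrite !mxE /= mulr0 addr0 exprMn.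
Qed.

Lemma one_sparse_delta0 a : one_sparse (a *: e0).
Proof.
apply: leq_trans (subset_leq_card _) (eq_leq (cards1 (0 : 'I_d.+1))).
apply/subsetP => i.
by rewrite !inE !mxE; have [//|_] := eqVneq i 0; rewrite /= mulr0 eqxx.
Qed.

Lemma shear_sqnorm_bounds w x (eta : R) :
  0 < eta <= 1 -> sqnorm w <= eta ^+ 2 ->
  (1 - eta) ^+ 2 * sqnorm x <= sqnorm (shear w *m x) <= (1 + eta) ^+ 2 * sqnorm x.
Proof.
by move=> eta_range w_le; rewrite shearE sqnorm_add_scale_bounds ?entry0_sqr_le.
Qed.

End Shear.

Section Embedding.
Variables (R : realType) (n d : nat).
Hypotheses (n_gt0 : (0 < n)%N) (d_le_n : (d <= n)%N).

Definition embed (M : 'M[R]_d) : 'M[R]_(n, d) := Num.sqrt n%:R *: (pid_mx d *m M).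

Lemma Sigma_embed (M : 'M[R]_d) : Sigma (embed M) = M^T *m M.
Proof.
rewrite /Sigma /embed [(_ *: _)^T]linearZ /= [(_ *m _)^T]trmx_mul tr_pid_mx.
rewrite -scalemxAl -scalemxAr !scalerA.
rewrite -mulrA -expr2 sqr_sqrtr ?ler0n // mulVf ?pnatr_eq0 -?lt0n // scale1r.
by rewrite mulmxA -(mulmxA M^T) pid_mx_id // pid_mx_1 mulmx1.
Qed.

Lemma Xclass_embed (gamma : R) (M : 'M[R]_d) :
  (forall x, gamma^-1 * sqnorm x <= sqnorm (M *m x) <= gamma * sqnorm x) ->
  Xclass gamma (embed M).
Proof.
move=> M_bounds; rewrite /Xclass /loewner_le /psd Sigma_embed.
split=> x; rewrite quad_formB sqnorm_mulmx quad_form_scalar subr_ge0;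
  by case/andP: (M_bounds x).
Qed.

End Embedding.

Lemma Xclass_embed_shear (R : realType) n d (gamma eta : R) (w : 'cV[R]_d.+1) :
  (d.+1 <= n)%N -> 0 < eta <= 1 -> gamma^-1 <= (1 - eta) ^+ 2 -> (1 + eta) ^+ 2 <= gamma ->
  sqnorm w <= eta ^+ 2 -> Xclass gamma (embed n (shear w)).
Proof.
move=> d_lt_n eta_range gamma_le gamma_ge w_le.
apply: (Xclass_embed (leq_trans (ltn0Sn d) d_lt_n) d_lt_n) => x.
have /andP[lo hi] := shear_sqnorm_bounds x eta_range w_le.
by rewrite (le_trans _ lo) ?(le_trans hi) ?ler_wpM2r ?sqnorm_ge0.
Qed.

Section Calibration.
Variable R : realType.

Lemma quadratic_root_near0 (x : R) : 0 <= x <= 1 ->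
  exists a : R, [/\ a ^+ 2 + 2 * a + x = 0, - x <= a & a <= 0].
Proof.
move=> /andP[x_ge0 x_le1]; set s := Num.sqrt (1 - x).
have s_ge0 : 0 <= s := sqrtr_ge0 _.
have s_sqr : s ^+ 2 = 1 - x by rewrite sqr_sqrtr // subr_ge0.
have s_le1 : s <= 1 by nra.
exists (s - 1); split; [ | nra | lra].
by rewrite -[x]opprK -[- x](addKr 1) -s_sqr; ring.
Qed.

Lemma margin_of_gamma (gamma : R) : 1 < gamma ->
  exists eta : R, [/\ 0 < eta <= 1, gamma^-1 <= (1 - eta) ^+ 2 & (1 + eta) ^+ 2 <= gamma].
Proof.
move=> gamma_gt1; have gamma_gt0 : 0 < gamma by lra.
set eta := (gamma - 1) / (4 * gamma).
have eta_def : eta * (4 * gamma) = gamma - 1 by rewrite mulfVK // mulf_neq0 // gt_eqF.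
have eta_gt0 : 0 < eta by rewrite divr_gt0 ?subr_gt0 // mulr_gt0.
have eta_lt1 : eta < 1 by nra.
exists eta; split; first by rewrite eta_gt0 ltW.
  by rewrite -(ler_pM2l gamma_gt0) mulfV ?gt_eqF //; nra.
by nra.
Qed.

Lemma shear_parameters (k rho eta : R) : 0 < k -> 0 <= rho -> 0 < eta <= 1 ->
  exists c a : R, [/\ 0 < c, a ^+ 2 + 2 * a + k * (c ^+ 2 * rho) = 0,
    c ^+ 2 * rho + a ^+ 2 <= eta ^+ 2 & k ^+ 2 * (c ^+ 2 * rho) + a ^+ 2 <= eta ^+ 2].
Proof.
move=> k_gt0 rho_ge0 /andP[eta_gt0 eta_le1].
have den_gt0 : 0 < 2 * (1 + k) ^+ 2 by rewrite mulr_gt0 ?exprn_gt0 //; lra.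
set m := eta ^+ 2 / (2 * (1 + k) ^+ 2).
have m_def : m * (2 * (1 + k) ^+ 2) = eta ^+ 2 by rewrite mulfVK // gt_eqF.
have m_gt0 : 0 < m by rewrite divr_gt0 ?exprn_gt0.
have k1_sqr : 1 <= (1 + k) ^+ 2 by nra.
have m_le : m <= 1 / 2 by nra.
set c := m / (1 + rho).
have rho1_gt0 : 0 < 1 + rho by lra.
have c_def : c * (1 + rho) = m by rewrite mulfVK // gt_eqF.
have c_gt0 : 0 < c by rewrite divr_gt0.
set mu := c ^+ 2 * rho.
have mu_ge0 : 0 <= mu by rewrite mulr_ge0 ?sqr_ge0.
have mu_le : mu <= m by rewrite /mu; nra.
have kmu_range : 0 <= k * mu <= 1 by rewrite mulr_ge0 ?(ltW k_gt0) //=; nra.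
have [a [a_root a_ge a_le]] := quadratic_root_near0 kmu_range.
have a_sqr : a ^+ 2 <= k ^+ 2 * mu.
  have : a ^+ 2 <= (k * mu) ^+ 2 by nra.
  have : (k * mu) ^+ 2 <= k ^+ 2 * mu by rewrite exprMn ler_wpM2l ?sqr_ge0 //; nra.
  lra.
have k_mu_le : (1 + 2 * k ^+ 2) * mu <= eta ^+ 2.
  rewrite -m_def mulrC; apply: ler_pM; rewrite ?addr_ge0 ?sqr_ge0 //; nra.
have k2mu_ge0 : 0 <= k ^+ 2 * mu by rewrite mulr_ge0 ?sqr_ge0.
exists c, a; rewrite -/mu; split=> //; apply: le_trans k_mu_le.
  by rewrite mulrDl mul1r -mulrA; lra.
by rewrite mulrDl mul1r -mulrA; lra.
Qed.

End Calibration.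

Section Construction.
Variable R : realType.

Lemma mix_moment_match m (S1 S2 : 'M[R]_m) (l1 l2 c p v0 : R) (u z : 'cV[R]_m) :
  l1 != 0 -> c != 0 -> l1 *: S1 + l2 *: S2 = 1%:M -> S1 *m u = c *: z + p *: u ->
  l1 *: (S1 *m ((v0 - p / c + (l1 * c)^-1) *: u)) + l2 *: (S2 *m ((v0 - p / c) *: u))
    = z + v0 *: u.
Proof.
(* As [l2 S2 = I - l1 S1], the left side is [b2 + l1 S1 (b1 - b2)]. *)
move=> l1_neq0 c_neq0 mix S1u.
have l2S2 : l2 *: S2 = 1%:M - l1 *: S1 by rewrite -mix addrAC subrr add0r.
rewrite (scalemxAl l2) l2S2 mulmxBl mul1mx -!scalemxAl -!scalemxAr S1u.
by apply/matrixP => i j; rewrite !mxE; field; rewrite c_neq0.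
Qed.

Definition sparse_design_pair n d (gamma l1 l2 : R) (v : 'cV[R]_d) : Prop :=
  exists (X1 X2 : 'M[R]_(n, d)) (b1 b2 : 'cV[R]_d),
    [/\ Xclass gamma X1 /\ Xclass gamma X2, one_sparse b1 /\ one_sparse b2,
        l1 *: Sigma X1 + l2 *: Sigma X2 = 1%:M,
        l1 *: (Sigma X1 *m b1) + l2 *: (Sigma X2 *m b2) = v
      & is_argmin2 l1 l2 X1 X2 b1 b2 v].

Lemma sparse_design_pair0 n (gamma l1 l2 : R) (v : 'cV[R]_0) :
  sparse_design_pair n gamma l1 l2 v.
Proof.
have cV0_eq (x y : 'cV[R]_0) : x = y by apply/matrixP => [] [].
have psd0 (A : 'M[R]_0) : psd A by move=> x; rewrite mxE big_ord0.
exists 0, 0, 0, 0; split.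
- by do 2!split; apply: psd0.
- by split; rewrite /one_sparse (leq_trans (max_card _)) // card_ord.
- by apply/matrixP => [] [].
- exact: cV0_eq.
- by split=> t; [rewrite (cV0_eq t v) | move=> _; apply: cV0_eq].
Qed.

Lemma sparse_design_pairS n d (gamma l1 l2 : R) (v : 'cV[R]_d.+1) :
  (d.+1 <= n)%N -> 1 < gamma -> 0 < l1 -> 0 < l2 -> l1 + l2 = 1 ->
  sparse_design_pair n gamma l1 l2 v.
Proof.
move=> d_lt_n gamma_gt1 l1_gt0 l2_gt0 l_sum.
have n_gt0 : (0 < n)%N := leq_trans (ltn0Sn d) d_lt_n.
have [eta [eta_range gamma_le gamma_ge]] := margin_of_gamma gamma_gt1.
set e := e0 R d; set v0 := v ord0 ord0; set vp := v - v0 *: e.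
have vp0 : vp ord0 ord0 = 0 by rewrite !mxE eqxx mulr1 subrr.
have vE : v = vp + v0 *: e by rewrite subrK.
clearbody vp.
have k_gt0 : 0 < l1 / l2 by rewrite divr_gt0.
have [c [a [c_gt0 a_root w1_le w2_le]]] :=
  shear_parameters k_gt0 (sqnorm_ge0 vp) eta_range.
set w1 := c *: vp + a *: e; set w2 := (- (l1 / l2 * c)) *: vp + a *: e.
have w1_sqnorm : sqnorm w1 = c ^+ 2 * sqnorm vp + a ^+ 2 by rewrite sqnorm_orth_delta0.
have w2_sqnorm : sqnorm w2 = (l1 / l2) ^+ 2 * (c ^+ 2 * sqnorm vp) + a ^+ 2.
  by rewrite sqnorm_orth_delta0 // sqrrN exprMn mulrA.
set X1 := embed n (shear w1); set X2 := embed n (shear w2).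
have mix : l1 *: Sigma X1 + l2 *: Sigma X2 = 1%:M.
  rewrite !Sigma_embed //; apply: (gram_shear_mix (a := a)) => //.
    apply/matrixP => i j; rewrite !mxE (_ : l1 = 1 - l2); last by lra.
    by field; rewrite gt_eqF.
  rewrite w1_sqnorm w2_sqnorm -a_root (_ : l1 = 1 - l2); last by lra.
  by field; rewrite gt_eqF.
have S1e : Sigma X1 *m e = c *: vp + (1 + 2 * a + sqnorm w1) *: e.
  have w1_0 : w1 ord0 ord0 = a by rewrite !mxE vp0 eqxx mulr0 mulr1 add0r.
  rewrite Sigma_embed // gram_shear_delta0 w1_0.
  by apply/matrixP => i j; rewrite !mxE; ring.
have moment := mix_moment_match v0 (lt0r_neq0 l1_gt0) (lt0r_neq0 c_gt0) mix S1e.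
rewrite -vE in moment.
exists X1, X2; do 2!eexists; split; last exact: is_argmin2_normal_eq moment.
- by split; apply: (Xclass_embed_shear d_lt_n eta_range gamma_le gamma_ge);
    rewrite ?w1_sqnorm ?w2_sqnorm.
- by split; apply: one_sparse_delta0.
- exact: mix.
- exact: moment.
Qed.

End Construction.

Theorem claimD1 (R : realType) (n d : nat) (gamma l1 l2 : R)
  (hdn : (d <= n)%N) (hgamma : 1 < gamma)
  (hl1 : 0 < l1) (hl2 : 0 < l2) (hl : l1 + l2 = 1)
  (v : 'cV[R]_d) (hv : norm2 v <= 1) :
  exists (X1 X2 : 'M[R]_(n, d)) (b1 b2 : 'cV[R]_d),
    [/\ Xclass gamma X1 /\ Xclass gamma X2, one_sparse b1 /\ one_sparse b2,
        l1 *: Sigma X1 + l2 *: Sigma X2 = 1%:M,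
        l1 *: (Sigma X1 *m b1) + l2 *: (Sigma X2 *m b2) = v
      & is_argmin2 l1 l2 X1 X2 b1 b2 v].
Proof.
case: d hdn v hv => [|d] hdn v _; first exact: sparse_design_pair0.
exact: sparse_design_pairS.
Qed.
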